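(* Let $\beta\in[1,2]$ and let $f\in C[0,1]$ satisfy $f(x)\neq0$ for all $x\in[0,1]$. Then there exist $g,h\in C[0,1]$ such that $$f=g\cdot h\quad\text{and}\quad \overline{\dim}_B G(g)=\overline{\dim}_B G(h)=\beta$$ if and only if $\overline{\dim}_B G(f)\le\beta$.
   Context: $C[0,1]$ is the space of real-valued continuous functions on $[0,1]$; $G(h)=\{(x,h(x)):x\in[0,1]\}\subset\mathbb{R}^2$ is the graph of $h$; $g\cdot h$ is the pointwise product. For a nonempty bounded set $F$, $N_\delta(F)$ is the smallest number of sets of diameter at most $\delta$ covering $F$, and $\overline{\dim}_B F=\limsup_{\delta\to0}\frac{\log N_\delta(F)}{-\log\delta}$. *)

From Stdlib Require Import Reals.
From Coquelicot Require Import Coquelicot.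
Open Scope R_scope.

Definition dist2 (p q : R * R) : R :=
  sqrt ((fst p - fst q) ^ 2 + (snd p - snd q) ^ 2).

Definition diam_le (S : R * R -> Prop) (d : R) : Prop :=
  forall p q, S p -> S q -> dist2 p q <= d.

Definition covers_by (F : R * R -> Prop) (d : R) (n : nat) : Prop :=
  exists U : nat -> (R * R -> Prop),
    (forall i, (i < n)%nat -> diam_le (U i) d) /\
    (forall p, F p -> exists i, (i < n)%nat /\ U i p).

(* N_d(F): smallest number of sets of diameter at most d covering F
   (p_infty if no finite cover exists) *)
Definition Ncover (F : R * R -> Prop) (d : R) : Rbar :=
  Rbar_glb (fun x => exists n, covers_by F d n /\ x = Finite (INR n)).

Definition box_ratio (F : R * R -> Prop) (d : R) : Rbar :=
  match Ncover F d with
  | Finite r => Finite (ln r / - ln d)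
  | _ => p_infty
  end.

(* upper box dimension: limsup_{d -> 0+} log N_d(F) / (- log d)
   = inf_{e > 0} sup_{0 < d < e} ratio *)
Definition upper_box_dim (F : R * R -> Prop) : Rbar :=
  Rbar_glb (fun y => exists e, 0 < e /\
     y = Rbar_lub (fun z => exists d, 0 < d < e /\ z = box_ratio F d)).

Definition graph (h : R -> R) : R * R -> Prop :=
  fun p => 0 <= fst p <= 1 /\ snd p = h (fst p).

Definition cont01 (h : R -> R) : Prop :=
  forall x, 0 <= x <= 1 -> forall eps, 0 < eps -> exists del, 0 < del /\
    forall y, 0 <= y <= 1 -> Rabs (y - x) < del -> Rabs (h y - h x) < eps.

From Stdlib Require Import Reals Lra Lia Classical ClassicalDescription ZArith.
From Coquelicot Require Import Coquelicot.
Open Scope R_scope.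

(* If f = g h with g, h continuous, the increments of f are dominated by those of g and h, and
   counting boxes column by column over the grid of mesh 1/n shows that such domination cannot
   raise the upper box dimension of a graph.  Conversely, for beta = 1 take g = 1.  For beta > 1
   take a Takagi-type function p with values in [0, 1] whose graph has dimension beta, and write
   f = (1 + t p) * (f / (1 + t p)) for t = 1, 2.  All these factors have dimension at most beta
   and 1 + t p has dimension exactly beta.  If both cofactors f / (1 + t p) had dimension below
   beta, so would their quotient (1 + 2 p) / (1 + p), and hence p. *)

Fixpoint nsum (f : nat -> nat) (n : nat) : nat :=
  match n with O => O | S n => (nsum f n + f n)%nat end.

Definition indicator (P : Prop) : nat :=
  if excluded_middle_informative P then 1%nat else 0%nat.

Definition count (N : nat) (P : nat -> Prop) : nat := nsum (fun i => indicator (P i)) N.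

Lemma indicator_true (P : Prop) : P -> indicator P = 1%nat.
Proof. unfold indicator; destruct excluded_middle_informative; tauto. Qed.

Lemma indicator_false (P : Prop) : ~ P -> indicator P = 0%nat.
Proof. unfold indicator; destruct excluded_middle_informative; tauto. Qed.

Lemma nsum_le f g n :
  (forall j, (j < n)%nat -> (f j <= g j)%nat) -> (nsum f n <= nsum g n)%nat.
Proof.
  induction n as [|n IH]; simpl; intros H; [lia|].
  specialize (IH (fun j Hj => H j ltac:(lia))). specialize (H n ltac:(lia)). lia.
Qed.

Lemma nsum_ext f g n : (forall j, (j < n)%nat -> f j = g j) -> nsum f n = nsum g n.
Proof.
  induction n as [|n IH]; simpl; intros H; [lia|].
  rewrite IH by (intros; apply H; lia). rewrite H; lia.
Qed.

Lemma nsum_add f g n : nsum (fun j => f j + g j)%nat n = (nsum f n + nsum g n)%nat.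
Proof. induction n; simpl; lia. Qed.

Lemma nsum_const c n : nsum (fun _ => c) n = (c * n)%nat.
Proof. induction n; simpl; lia. Qed.

Lemma nsum_scal a f n : nsum (fun j => a * f j)%nat n = (a * nsum f n)%nat.
Proof. induction n; simpl; lia. Qed.

Lemma nsum_swap (a : nat -> nat -> nat) n N :
  nsum (fun j => nsum (fun i => a i j) N) n = nsum (fun i => nsum (fun j => a i j) n) N.
Proof.
  induction n as [|n IH]; simpl.
  - induction N; simpl; lia.
  - rewrite IH, <- nsum_add. apply nsum_ext. intros; simpl; lia.
Qed.

Lemma nsum_ge_INR f n r : (forall j, (j < n)%nat -> r <= INR (f j)) -> INR n * r <= INR (nsum f n).
Proof.
  induction n as [|n IH]; intros H; simpl nsum; [simpl; lra|].
  rewrite plus_INR, S_INR. specialize (IH (fun j Hj => H j ltac:(lia))).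
  specialize (H n ltac:(lia)). lra.
Qed.

Lemma count_ge1 N P i : (i < N)%nat -> P i -> (1 <= count N P)%nat.
Proof.
  unfold count; induction N as [|N IH]; simpl; intros Hi HP; [lia|].
  destruct (Nat.eq_dec i N) as [->|].
  - rewrite indicator_true; auto. lia.
  - specialize (IH ltac:(lia) HP). lia.
Qed.

Lemma count_remove N P i0 : (i0 < N)%nat -> P i0 ->
  count N P = S (count N (fun i => P i /\ i <> i0)).
Proof.
  unfold count; intros Hi0 HP0; induction N as [|N IH]; simpl; [lia|].
  destruct (Nat.eq_dec N i0) as [->|Hne].
  - rewrite indicator_true, indicator_false by tauto.
    rewrite (nsum_ext _ (fun i => indicator (P i /\ i <> i0))); [lia|].
    intros j Hj. unfold indicator.
    assert (j <> i0) by lia. do 2 destruct excluded_middle_informative; tauto.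
  - rewrite IH by lia. replace (indicator (P N /\ N <> i0)) with (indicator (P N)); [lia|].
    unfold indicator. do 2 destruct excluded_middle_informative; tauto.
Qed.

Lemma count_le_window N P k :
  (forall j, P j -> (k <= j <= k + 4)%nat) -> (count N P <= 5)%nat.
Proof.
  intros H. enough (forall n, (count n P <= Nat.min 5 (n - k))%nat) by (specialize (H0 N); lia).
  unfold count; induction n; cbn [nsum]; [lia|].
  destruct (classic (P n)) as [Hp|Hp].
  - rewrite indicator_true by auto. specialize (H n Hp). lia.
  - rewrite indicator_false by auto. lia.
Qed.

Lemma nat_floor k t : (1 <= k)%nat -> 0 <= t <= INR k ->
  exists i, (i < k)%nat /\ INR i <= t <= INR i + 1.
Proof.
  intros Hk. induction k as [|k IH]; [lia|]. intros Ht.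
  destruct (Nat.eq_dec k 0) as [->|Hk0].
  - exists 0%nat. simpl in *. split; [lia|lra].
  - destruct (Rle_dec t (INR k)).
    + destruct IH as [i [Hi Hi2]]; [lia| lra |]. exists i; split; [lia|auto].
    + exists k. rewrite S_INR in Ht. split; [lia|lra].
Qed.

Lemma nat_above X : exists n : nat, X < INR n /\ INR n <= Rmax 0 X + 1.
Proof.
  destruct (archimed X) as [H1 H2].
  destruct (Z_le_gt_dec (up X) 0).
  - exists 0%nat. simpl. apply IZR_le in l. unfold Rmax; destruct Rle_dec; lra.
  - exists (Z.to_nat (up X)). rewrite INR_IZR_INZ, Z2Nat.id by lia.
    unfold Rmax; destruct Rle_dec; lra.
Qed.

Lemma nat_min (P : nat -> Prop) m : P m -> exists k, P k /\ forall n, P n -> (k <= n)%nat.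
Proof.
  revert m. induction m as [m IH] using (well_founded_induction lt_wf). intros Pm.
  destruct (classic (exists n, (n < m)%nat /\ P n)) as [[n [Hn Pn]]|Hno].
  - exact (IH n Hn Pn).
  - exists m; split; auto. intros n Pn. destruct (le_lt_dec m n); auto. exfalso; eauto.
Qed.

Lemma dist2_le_sqrt2 p q w : 0 <= w ->
  Rabs (fst p - fst q) <= w -> Rabs (snd p - snd q) <= w -> dist2 p q <= sqrt 2 * w.
Proof.
  intros Hw H1 H2. unfold dist2. rewrite <- (sqrt_pow2 w Hw), <- sqrt_mult_alt by lra.
  apply sqrt_le_1_alt.
  assert ((fst p - fst q) ^ 2 <= w ^ 2).
  { rewrite <- (pow2_abs (fst p - fst q)). apply pow_incr. split; [apply Rabs_pos|auto]. }
  assert ((snd p - snd q) ^ 2 <= w ^ 2).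
  { rewrite <- (pow2_abs (snd p - snd q)). apply pow_incr. split; [apply Rabs_pos|auto]. }
  lra.
Qed.

Lemma dist2_ge_fst p q : Rabs (fst p - fst q) <= dist2 p q.
Proof.
  unfold dist2. rewrite <- sqrt_Rsqr_abs. apply sqrt_le_1_alt. unfold Rsqr.
  pose proof (pow2_ge_0 (snd p - snd q)). simpl in *. lra.
Qed.

Lemma dist2_ge_snd p q : Rabs (snd p - snd q) <= dist2 p q.
Proof.
  unfold dist2. rewrite <- sqrt_Rsqr_abs. apply sqrt_le_1_alt. unfold Rsqr.
  pose proof (pow2_ge_0 (fst p - fst q)). simpl in *. lra.
Qed.

Lemma covers_by_mono F d d' c : d <= d' -> covers_by F d c -> covers_by F d' c.
Proof.
  intros Hd [U [HU1 HU2]]. exists U; split; auto.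
  intros i Hi p q Hp Hq. specialize (HU1 i Hi p q Hp Hq). lra.
Qed.

Lemma covers_by_sub F G d c : (forall p, F p -> G p) -> covers_by G d c -> covers_by F d c.
Proof. intros H [U [H1 H2]]. exists U; split; auto. Qed.

Lemma covers_by_union F1 F2 d a b : covers_by F1 d a -> covers_by F2 d b ->
  covers_by (fun p => F1 p \/ F2 p) d (a + b).
Proof.
  intros [U1 [A1 B1]] [U2 [A2 B2]].
  exists (fun i => if Nat.ltb i a then U1 i else U2 (i - a)%nat). split.
  - intros i Hi. destruct (Nat.ltb_spec i a); [apply A1 | apply A2]; lia.
  - intros p [Hp|Hp].
    + destruct (B1 p Hp) as [i [Hi Ui]]. exists i. split; [lia|].
      destruct (Nat.ltb_spec i a); [auto|lia].
    + destruct (B2 p Hp) as [i [Hi Ui]]. exists (a + i)%nat. split; [lia|].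
      destruct (Nat.ltb_spec (a + i) a); [lia|]. now replace (a + i - a)%nat with i by lia.
Qed.

Lemma covers_by_family F d n (Fj : nat -> R * R -> Prop) (k : nat -> nat) :
  (forall j, (j < n)%nat -> covers_by (Fj j) d (k j)) ->
  (forall p, F p -> exists j, (j < n)%nat /\ Fj j p) ->
  covers_by F d (nsum k n).
Proof.
  revert F. induction n as [|n IH]; intros F Hc Hu; simpl.
  - exists (fun _ _ => False). split; [intros; lia|].
    intros p Fp. destruct (Hu p Fp) as [j [Hj _]]; lia.
  - apply covers_by_sub with (G := fun p => (exists j, (j < n)%nat /\ Fj j p) \/ Fj n p).
    + intros p Fp. destruct (Hu p Fp) as [j [Hj Hp]].
      destruct (Nat.eq_dec j n) as [->|]; [right; auto | left; exists j; split; [lia|auto]].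
    + apply covers_by_union; [apply IH; auto; intros; apply Hc; lia | apply Hc; lia].
Qed.

Lemma covers_by_column a w lo k : 0 < w ->
  covers_by (fun p => a <= fst p <= a + w /\ lo <= snd p <= lo + INR k * w) (sqrt 2 * w) (S k).
Proof.
  intros Hw.
  exists (fun i p => a <= fst p <= a + w /\ lo + INR i * w <= snd p <= lo + (INR i + 1) * w).
  split.
  - intros i Hi p q [Hp1 Hp2] [Hq1 Hq2]. apply dist2_le_sqrt2; [lra| |]; apply Rabs_le; lra.
  - intros p [Hp1 Hp2].
    destruct (nat_floor (S k) ((snd p - lo) / w)) as [i [Hi [A B]]]; [lia| |].
    + rewrite S_INR. split.
      * apply Rmult_le_pos; [lra| left; apply Rinv_0_lt_compat; lra].
      * apply Rmult_le_reg_r with w; auto. unfold Rdiv; rewrite Rmult_assoc, Rinv_l by lra. nra.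
    + exists i; split; auto. split; auto.
      apply Rmult_le_compat_r with (r := w) in A; [|lra].
      apply Rmult_le_compat_r with (r := w) in B; [|lra].
      unfold Rdiv in A, B. rewrite Rmult_assoc, Rinv_l in A, B by lra. lra.
Qed.

Lemma interval_length_le_count N (V : nat -> R -> Prop) (delta : R) :
  0 <= delta -> (forall i y y', V i y -> V i y' -> Rabs (y - y') <= delta) ->
  forall m P a b, count N P = m ->
  (forall y, a <= y <= b -> exists i, (i < N)%nat /\ P i /\ V i y) ->
  b - a <= INR m * delta.
Proof.
  intros Hd HV. induction m as [|m IH]; intros P a b Hc Hcov.
  - simpl. destruct (Rle_dec a b); [|lra].
    destruct (Hcov a ltac:(lra)) as [i [Hi [Pi _]]].
    pose proof (count_ge1 N P i Hi Pi). lia.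
  - destruct (Rle_dec (b - a) delta).
    { rewrite S_INR. pose proof (pos_INR m). nra. }
    destruct (Hcov b ltac:(lra)) as [i0 [Hi0 [Pi0 Vi0]]].
    rewrite (count_remove N P i0 Hi0 Pi0) in Hc. injection Hc as Hc.
    (* Removing the set that contains [b] leaves [a, b - delta) covered by [m] sets. *)
    assert (Hshort : forall eps, 0 < eps -> (b - delta - eps) - a <= INR m * delta).
    { intros eps He. apply (IH _ a (b - delta - eps) Hc).
      intros y Hy. destruct (Hcov y ltac:(lra)) as [i [Hi [Pi Vi]]].
      exists i. repeat split; auto. intros ->. specialize (HV i0 y b Vi Vi0).
      apply Rabs_le_between in HV. lra. }
    rewrite S_INR. destruct (Rle_dec (b - a) ((INR m + 1) * delta)); auto.
    specialize (Hshort ((b - a - (INR m + 1) * delta) / 2) ltac:(lra)). lra.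
Qed.

(** * Upper box dimension *)

Lemma Rbar_glb_spec E : Rbar_is_glb E (Rbar_glb E).
Proof. unfold Rbar_glb; destruct (Rbar_ex_glb E); auto. Qed.

Lemma Rbar_lub_spec E : Rbar_is_lub E (Rbar_lub E).
Proof. unfold Rbar_lub; destruct (Rbar_ex_lub E); auto. Qed.

Lemma Rbar_le_of_le_plus_eps (x : Rbar) D :
  (forall eps, 0 < eps -> Rbar_le x (Finite (D + eps))) -> Rbar_le x (Finite D).
Proof.
  intros H. destruct x as [r| |]; simpl; auto.
  - destruct (Rle_dec r D); auto. specialize (H ((r - D) / 2) ltac:(lra)). simpl in H. lra.
  - exact (H 1 ltac:(lra)).
Qed.

Lemma Rbar_ge_of_ge_minus_eps (x : Rbar) D :
  (forall eps, 0 < eps -> Rbar_le (Finite (D - eps)) x) -> Rbar_le (Finite D) x.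
Proof.
  intros H. destruct x as [r| |]; simpl; auto.
  - destruct (Rle_dec D r); auto. specialize (H ((D - r) / 2) ltac:(lra)). simpl in H. lra.
  - exact (H 1 ltac:(lra)).
Qed.

Lemma Rbar_lt_finite_max (x y : Rbar) b : 0 < b -> Rbar_lt x (Finite b) -> Rbar_lt y (Finite b) ->
  exists D, 0 <= D < b /\ Rbar_le x (Finite D) /\ Rbar_le y (Finite D).
Proof.
  intros Hb Hx Hy.
  assert (Hr : forall z : Rbar, Rbar_lt z (Finite b) -> exists r, r < b /\ Rbar_le z (Finite r)).
  { intros [r| |] Hz; simpl in Hz; try contradiction.
    - exists r; simpl; split; lra.
    - exists 0; simpl; split; auto; lra. }
  destruct (Hr x Hx) as [r1 [R1 X1]], (Hr y Hy) as [r2 [R2 X2]].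
  exists (Rmax 0 (Rmax r1 r2)). split; [split; [apply Rmax_l | repeat apply Rmax_lub_lt; lra]|].
  split.
  - eapply Rbar_le_trans; [apply X1|]. simpl. eapply Rle_trans; [apply Rmax_l | apply Rmax_r].
  - eapply Rbar_le_trans; [apply X2|]. simpl. eapply Rle_trans; [apply Rmax_r | apply Rmax_r].
Qed.

Lemma ln_0 : ln 0 = 0.
Proof. unfold ln. case Rlt_dec; intros r; [exfalso; lra | reflexivity]. Qed.

Lemma ln_neg_pos d : 0 < d < 1 -> 0 < - ln d.
Proof. intros Hd. assert (ln d < ln 1) by (apply ln_increasing; lra). rewrite ln_1 in H. lra. Qed.

Lemma Ncover_min F d m : covers_by F d m ->
  exists k, covers_by F d k /\ Ncover F d = Finite (INR k) /\
            forall n, covers_by F d n -> (k <= n)%nat.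
Proof.
  intros Hm. destruct (nat_min (covers_by F d) m Hm) as [k [Hk Hmin]].
  exists k; repeat split; auto.
  unfold Ncover. apply Rbar_is_glb_unique. split.
  - intros x [n [Hn ->]]. simpl. apply le_INR; auto.
  - intros b Hb. apply Hb. exists k; auto.
Qed.

Lemma Ncover_infty F d : (forall n, ~ covers_by F d n) -> Ncover F d = p_infty.
Proof.
  intros H. unfold Ncover. apply Rbar_is_glb_unique. split.
  - intros x [n [Hn _]]. exfalso; eapply H; eauto.
  - intros b _. destruct b; simpl; auto.
Qed.

Lemma box_ratio_le_of_covers F d c r : 0 < d < 1 -> 0 <= r ->
  covers_by F d c -> ln (INR c) <= r * - ln d -> Rbar_le (box_ratio F d) (Finite r).
Proof.
  intros Hd Hr Hc Hln. pose proof (ln_neg_pos d Hd) as HL.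
  destruct (Ncover_min F d c Hc) as [k [_ [Hk Hmin]]].
  unfold box_ratio. rewrite Hk. simpl.
  apply Rmult_le_reg_r with (- ln d); auto. unfold Rdiv. rewrite Rmult_assoc, Rinv_l by lra.
  destruct k as [|k].
  - change (INR 0) with 0. rewrite ln_0. nra.
  - assert (ln (INR (S k)) <= ln (INR c)); [|lra].
    apply ln_le; [apply lt_0_INR; lia | apply le_INR; auto].
Qed.

Lemma covers_of_box_ratio_le F d r : 0 < d < 1 ->
  Rbar_le (box_ratio F d) (Finite r) -> exists c, covers_by F d c /\ ln (INR c) <= r * - ln d.
Proof.
  intros Hd Hb. pose proof (ln_neg_pos d Hd) as HL. unfold box_ratio in Hb.
  destruct (classic (exists m, covers_by F d m)) as [[m Hm]|Hno].
  - destruct (Ncover_min F d m Hm) as [k [Hk [Heq _]]]. rewrite Heq in Hb. simpl in Hb.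
    exists k. split; auto.
    apply Rmult_le_reg_r with (/ - ln d); [apply Rinv_0_lt_compat; lra|].
    replace (r * - ln d * / - ln d) with r by (field; lra). exact Hb.
  - rewrite Ncover_infty in Hb; [contradiction|]. intros n Hn; apply Hno; eauto.
Qed.

Lemma box_ratio_ge_of_covers F d r : 0 < d < 1 ->
  (forall c, covers_by F d c -> r * - ln d <= ln (INR c)) -> Rbar_le (Finite r) (box_ratio F d).
Proof.
  intros Hd Hc. pose proof (ln_neg_pos d Hd) as HL. unfold box_ratio.
  destruct (classic (exists m, covers_by F d m)) as [[m Hm]|Hno].
  - destruct (Ncover_min F d m Hm) as [k [Hk [-> _]]]. simpl.
    specialize (Hc k Hk). apply Rmult_le_reg_r with (- ln d); [lra|].
    unfold Rdiv. rewrite Rmult_assoc, Rinv_l by lra. lra.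
  - rewrite Ncover_infty; simpl; auto. intros n Hn; apply Hno; eauto.
Qed.

Lemma sqrt2_bounds : 1 <= sqrt 2 <= 3/2.
Proof. pose proof (sqrt_sqrt 2 ltac:(lra)). pose proof (sqrt_pos 2). split; nra. Qed.

Section UpperBoxDim.
Variable F : R * R -> Prop.

Let scale_sup (e : R) : Rbar := Rbar_lub (fun z => exists d, 0 < d < e /\ z = box_ratio F d).

Let upper_box_dim_unfold :
  upper_box_dim F = Rbar_glb (fun y => exists e, 0 < e /\ y = scale_sup e).
Proof. reflexivity. Qed.

Lemma upper_box_dim_le D :
  (forall eps, 0 < eps -> exists e, 0 < e /\
     forall d, 0 < d < e -> Rbar_le (box_ratio F d) (Finite (D + eps))) ->
  Rbar_le (upper_box_dim F) (Finite D).
Proof.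
  intros H. apply Rbar_le_of_le_plus_eps. intros eps He. destruct (H eps He) as [e [He0 Hd]].
  rewrite upper_box_dim_unfold. eapply Rbar_le_trans.
  - apply (proj1 (Rbar_glb_spec _)). exists e; eauto.
  - apply (proj2 (Rbar_lub_spec _)). intros z [d [Hd' ->]]. auto.
Qed.

Lemma upper_box_dim_le_elim D : Rbar_le (upper_box_dim F) (Finite D) ->
  forall eps, 0 < eps -> exists e, 0 < e /\
    forall d, 0 < d < e -> Rbar_le (box_ratio F d) (Finite (D + eps)).
Proof.
  intros H eps He. apply NNPP. intros Hn.
  assert (Hall : forall e, 0 < e -> exists d, 0 < d < e /\
                  Rbar_lt (Finite (D + eps)) (box_ratio F d)).
  { intros e He0. apply NNPP. intros Hn2. apply Hn. exists e; split; auto.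
    intros d Hd. apply Rbar_not_lt_le. intros Hlt. apply Hn2. exists d; auto. }
  assert (Hlow : Rbar_le (Finite (D + eps)) (upper_box_dim F)).
  { rewrite upper_box_dim_unfold. apply (proj2 (Rbar_glb_spec _)). intros y [e [He0 ->]].
    destruct (Hall e He0) as [d [Hd Hlt]].
    eapply Rbar_le_trans; [apply Rbar_lt_le, Hlt|]. apply (proj1 (Rbar_lub_spec _)). exists d; auto. }
  pose proof (Rbar_le_trans _ _ _ Hlow H). simpl in H0. lra.
Qed.

Lemma upper_box_dim_ge D :
  (forall eps e, 0 < eps -> 0 < e -> exists d, 0 < d < e /\ d < 1 /\
     forall c, covers_by F d c -> (D - eps) * - ln d <= ln (INR c)) ->
  Rbar_le (Finite D) (upper_box_dim F).
Proof.
  intros H. rewrite upper_box_dim_unfold. apply (proj2 (Rbar_glb_spec _)). intros y [e [He ->]].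
  apply Rbar_ge_of_ge_minus_eps. intros eps Heps.
  destruct (H eps e Heps He) as [d [Hd [Hd1 Hc]]].
  eapply Rbar_le_trans; [apply (box_ratio_ge_of_covers F d); [lra | exact Hc]|].
  apply (proj1 (Rbar_lub_spec _)). exists d; auto.
Qed.

(* Covers at the grid scales [sqrt 2 / n] suffice: any [d] lies within a factor 2 of one. *)
Lemma upper_box_dim_le_of_grid D K (n0 : nat) : 0 <= D ->
  (forall n : nat, (n0 <= n)%nat -> (1 <= n)%nat ->
     exists c, covers_by F (sqrt 2 / INR n) c /\ ln (INR c) <= K + D * ln (INR n)) ->
  Rbar_le (upper_box_dim F) (Finite D).
Proof.
  intros HD H. apply upper_box_dim_le. intros eps He.
  pose proof sqrt2_bounds as S2.
  set (X := (Rabs K + D * ln 2) / eps).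
  pose proof (pos_INR n0).
  exists (Rmin (Rmin (1/2) (/ (INR n0 + 1))) (exp (- X))). split.
  { apply Rmin_pos; [apply Rmin_pos; [lra| apply Rinv_0_lt_compat; lra]| apply exp_pos]. }
  intros d [Hd0 Hde].
  assert (Hd1 : d <= 1/2) by (eapply Rle_trans; [left; apply Hde| eapply Rle_trans; apply Rmin_l]).
  assert (Hd2 : d <= / (INR n0 + 1))
    by (eapply Rle_trans; [left; apply Hde| eapply Rle_trans; [apply Rmin_l| apply Rmin_r]]).
  assert (Hd3 : d <= exp (- X)) by (eapply Rle_trans; [left; apply Hde| apply Rmin_r]).
  assert (Hid : INR n0 + 1 <= / d)
    by (rewrite <- (Rinv_inv (INR n0 + 1)); apply Rinv_le_contravar; [lra|auto]).
  assert (Hsd : / d <= sqrt 2 / d)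
    by (unfold Rdiv; pose proof (Rinv_0_lt_compat d Hd0); nra).
  destruct (nat_above (sqrt 2 / d)) as [n [Hn1 Hn2]].
  rewrite Rmax_right in Hn2 by lra.
  assert (Hnn0 : (n0 <= n)%nat) by (apply INR_le; lra).
  assert (Hn : (1 <= n)%nat) by (apply (INR_le 1); simpl; lra).
  destruct (H n Hnn0 Hn) as [c [Hc Hcl]].
  apply box_ratio_le_of_covers with c; [lra | nra | |].
  - apply covers_by_mono with (sqrt 2 / INR n); auto.
    apply Rmult_le_reg_r with (INR n); [lra|]. unfold Rdiv. rewrite Rmult_assoc, Rinv_l by lra.
    apply Rmult_le_reg_l with (/ d); [apply Rinv_0_lt_compat; lra|].
    replace (/ d * (d * INR n)) with (INR n) by (field; lra). lra.
  - assert (Hlnn : ln (INR n) <= ln 2 - ln d).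
    { rewrite <- ln_div by lra. apply ln_le; [lra|].
      apply Rle_trans with (sqrt 2 / d + 1); [lra|].
      assert (2 <= / d) by (apply Rmult_le_reg_r with d; [lra|]; rewrite Rinv_l; lra).
      unfold Rdiv. nra. }
    assert (HX : X <= - ln d).
    { assert (ln d <= ln (exp (- X))) by (apply ln_le; lra). rewrite ln_exp in H1. lra. }
    assert (eps * X = Rabs K + D * ln 2) by (unfold X; field; lra).
    pose proof (Rle_abs K).
    assert (D * ln (INR n) <= D * (ln 2 - ln d)) by (apply Rmult_le_compat_l; auto).
    nra.
Qed.

End UpperBoxDim.

Definition clamp01 (x : R) : R := Rmax 0 (Rmin 1 x).

Lemma clamp01_id x : 0 <= x <= 1 -> clamp01 x = x.
Proof. intros. unfold clamp01, Rmax, Rmin. repeat destruct Rle_dec; lra. Qed.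

Lemma clamp01_in x : 0 <= clamp01 x <= 1.
Proof. unfold clamp01, Rmax, Rmin. repeat destruct Rle_dec; lra. Qed.

Lemma clamp01_lip x y : Rabs (clamp01 x - clamp01 y) <= Rabs (x - y).
Proof.
  unfold clamp01, Rmax, Rmin. repeat destruct Rle_dec; unfold Rabs; repeat destruct Rcase_abs; lra.
Qed.

Lemma cont01_continuity_clamp g : cont01 g -> continuity (fun x => g (clamp01 x)).
Proof.
  intros Hg x. unfold continuity_pt, continue_in, limit1_in, limit_in. simpl. unfold R_dist.
  intros eps He. destruct (Hg (clamp01 x) (clamp01_in x) eps He) as [del [Hd H]].
  exists del; split; auto. intros y [_ Hy]. apply H; [apply clamp01_in|].
  eapply Rle_lt_trans; [apply clamp01_lip|auto].
Qed.

Lemma cont01_continuity_abs_clamp g : cont01 g -> continuity (fun x => Rabs (g (clamp01 x))).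
Proof.
  intros Hg c. change (continuity_pt (comp Rabs (fun x => g (clamp01 x))) c).
  apply continuity_pt_comp; [apply cont01_continuity_clamp; auto | apply Rcontinuity_abs].
Qed.

Lemma cont01_bounded g : cont01 g -> exists M, 0 <= M /\ forall x, 0 <= x <= 1 -> Rabs (g x) <= M.
Proof.
  intros Hg.
  destruct (continuity_ab_maj (fun x => Rabs (g (clamp01 x))) 0 1 ltac:(lra)) as [xM [HM _]].
  { intros c _. apply cont01_continuity_abs_clamp; auto. }
  exists (Rabs (g (clamp01 xM))). split; [apply Rabs_pos|].
  intros x Hx. specialize (HM x Hx). rewrite clamp01_id in HM; auto.
Qed.

Lemma cont01_abs_bounded_below g : cont01 g -> (forall x, 0 <= x <= 1 -> g x <> 0) ->
  exists m, 0 < m /\ forall x, 0 <= x <= 1 -> m <= Rabs (g x).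
Proof.
  intros Hg Hnz.
  destruct (continuity_ab_min (fun x => Rabs (g (clamp01 x))) 0 1 ltac:(lra)) as [xm [Hm _]].
  { intros c _. apply cont01_continuity_abs_clamp; auto. }
  exists (Rabs (g (clamp01 xm))). split.
  - apply Rabs_pos_lt, Hnz, clamp01_in.
  - intros x Hx. specialize (Hm x Hx). rewrite (clamp01_id x) in Hm; auto.
Qed.

Lemma cont01_ivt g x1 x2 y : cont01 g -> 0 <= x1 <= 1 -> 0 <= x2 <= 1 ->
  Rmin (g x1) (g x2) <= y <= Rmax (g x1) (g x2) ->
  exists x, Rmin x1 x2 <= x <= Rmax x1 x2 /\ g x = y.
Proof.
  intros Hg H1 H2 Hy.
  destruct (IVT_gen (fun x => g (clamp01 x)) x1 x2 y (cont01_continuity_clamp g Hg))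
    as [x [Hx Hgx]]; [rewrite !clamp01_id; auto|].
  exists x. assert (0 <= x <= 1) by (unfold Rmin, Rmax in Hx; destruct Rle_dec; lra).
  rewrite clamp01_id in Hgx; auto.
Qed.

Definition osc_le (u : R -> R) (C : R) (g1 g2 : R -> R) : Prop :=
  forall x y, 0 <= x <= 1 -> 0 <= y <= 1 ->
    Rabs (u x - u y) <= C * (Rabs (g1 x - g1 y) + Rabs (g2 x - g2 y)).

Lemma cont01_osc_le u C g1 g2 : 0 <= C -> cont01 g1 -> cont01 g2 -> osc_le u C g1 g2 -> cont01 u.
Proof.
  intros HC H1 H2 Hu x Hx eps He.
  assert (He' : 0 < eps / (4 * (C + 1))) by (apply Rdiv_lt_0_compat; lra).
  destruct (H1 x Hx _ He') as [d1 [Hd1 K1]], (H2 x Hx _ He') as [d2 [Hd2 K2]].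
  exists (Rmin d1 d2). split; [apply Rmin_pos; auto|].
  intros y Hy Hyx.
  specialize (K1 y Hy ltac:(eapply Rlt_le_trans; [eauto|apply Rmin_l])).
  specialize (K2 y Hy ltac:(eapply Rlt_le_trans; [eauto|apply Rmin_r])).
  specialize (Hu y x Hy Hx).
  assert (C * (Rabs (g1 y - g1 x) + Rabs (g2 y - g2 x)) <= (C + 1) * (2 * (eps / (4 * (C + 1))))).
  { apply Rmult_le_compat; try lra. apply Rplus_le_le_0_compat; apply Rabs_pos. }
  replace ((C + 1) * (2 * (eps / (4 * (C + 1))))) with (eps / 2) in H by (field; lra). lra.
Qed.

(** * Columns of the grid of mesh [1/n] *)

Definition column (n j : nat) (x : R) : Prop := INR j <= x * INR n <= INR j + 1.

Definition column_meets (g : R -> R) (n : nat) (U : nat -> R * R -> Prop) (i j : nat) : Prop :=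
  exists x, column n j x /\ 0 <= x <= 1 /\ U i (x, g x).

Definition column_count g n U N j : nat := count N (fun i => column_meets g n U i j).

Lemma column_in01 n j x : (1 <= n)%nat -> (j < n)%nat -> column n j x -> 0 <= x <= 1.
Proof.
  intros Hn Hj [A B]. assert (1 <= INR n) by (apply (le_INR 1); lia).
  assert (INR j + 1 <= INR n) by (rewrite <- S_INR; apply le_INR; lia).
  pose proof (pos_INR j). split; nra.
Qed.

Lemma column_left_end n j : (1 <= n)%nat -> column n j (INR j / INR n).
Proof.
  intros Hn. assert (1 <= INR n) by (apply (le_INR 1); lia).
  unfold column. replace (INR j / INR n * INR n) with (INR j) by (field; lra). lra.
Qed.

Section GraphCover.
Variables (g : R -> R) (n N : nat) (U : nat -> R * R -> Prop).
Hypothesis n_ge1 : (1 <= n)%nat.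
Hypothesis g_cont : cont01 g.
Hypothesis U_diam : forall i, (i < N)%nat -> diam_le (U i) (/ INR n).
Hypothesis U_cover : forall p, graph g p -> exists i, (i < N)%nat /\ U i p.

(* A set of diameter [1/n] meets at most 5 consecutive columns. *)
Lemma column_count_sum_le : (nsum (column_count g n U N) n <= 5 * N)%nat.
Proof.
  assert (Hn1 : 1 <= INR n) by (apply (le_INR 1); lia).
  unfold column_count, count. rewrite nsum_swap.
  apply Nat.le_trans with (nsum (fun _ => 5%nat) N); [|rewrite nsum_const; lia].
  apply nsum_le. intros i Hi. fold (count n (fun j => column_meets g n U i j)).
  destruct (classic (exists j0, column_meets g n U i j0)) as [[j0 [x0 [[C01 C02] [X0 U0]]]]|Hno].
  - apply (count_le_window n _ (j0 - 2)). intros j [x [[C1 C2] [X Ux]]].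
    specialize (U_diam i Hi _ _ Ux U0).
    pose proof (Rle_trans _ _ _ (dist2_ge_fst _ _) U_diam) as D. simpl in D.
    apply Rabs_le_between in D.
    assert (E1 : x * INR n <= x0 * INR n + 1).
    { assert (x <= x0 + / INR n) by lra. apply Rmult_le_compat_r with (r := INR n) in H; [|lra].
      rewrite Rmult_plus_distr_r, Rinv_l in H by lra. lra. }
    assert (E2 : x0 * INR n <= x * INR n + 1).
    { assert (x0 <= x + / INR n) by lra. apply Rmult_le_compat_r with (r := INR n) in H; [|lra].
      rewrite Rmult_plus_distr_r, Rinv_l in H by lra. lra. }
    assert (INR j < INR (j0 + 3)) by (rewrite plus_INR; simpl; lra).
    assert (INR j0 < INR (j + 3)) by (rewrite plus_INR; simpl; lra).
    apply INR_lt in H, H0. lia.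
  - apply (count_le_window n _ 0). intros j Hj. exfalso; eauto.
Qed.

Lemma column_count_ge1 j : (j < n)%nat -> (1 <= column_count g n U N j)%nat.
Proof.
  intros Hj. pose proof (column_in01 n j _ n_ge1 Hj (column_left_end n j n_ge1)) as Hx.
  destruct (U_cover (INR j / INR n, g (INR j / INR n))) as [i [Hi Ui]]; [split; simpl; auto|].
  apply (count_ge1 N _ i Hi). exists (INR j / INR n). split; [apply column_left_end; auto|auto].
Qed.

Lemma column_count_sum_ge : (n <= nsum (column_count g n U N) n)%nat.
Proof.
  apply Nat.le_trans with (nsum (fun _ => 1%nat) n); [rewrite nsum_const; lia|].
  apply nsum_le. intros j Hj. apply column_count_ge1; auto.
Qed.

(* By the intermediate value theorem the values of [g] over a column form an interval,
   covered by the sets meeting that column. *)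
Lemma column_osc_le j x y : (j < n)%nat -> column n j x -> column n j y ->
  Rabs (g x - g y) <= INR (column_count g n U N j) / INR n.
Proof.
  intros Hj Cx Cy. assert (Hn1 : 1 <= INR n) by (apply (le_INR 1); lia).
  pose proof (column_in01 n j x n_ge1 Hj Cx) as Ix. pose proof (column_in01 n j y n_ge1 Hj Cy) as Iy.
  pose (V := fun i z => (i < N)%nat /\ exists w, 0 <= w <= 1 /\ U i (w, g w) /\ z = g w).
  assert (HV : forall i z z', V i z -> V i z' -> Rabs (z - z') <= / INR n).
  { intros i z z' [Hi [w [_ [Uw ->]]]] [_ [w' [_ [Uw' ->]]]].
    specialize (U_diam i Hi _ _ Uw Uw'). pose proof (dist2_ge_snd (w, g w) (w', g w')).
    simpl in *. lra. }
  assert (Habs : Rabs (g x - g y) = Rmax (g x) (g y) - Rmin (g x) (g y))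
    by (unfold Rmax, Rmin, Rabs; destruct Rle_dec, Rcase_abs; lra).
  rewrite Habs. unfold Rdiv.
  apply (interval_length_le_count N V (/ INR n) ltac:(left; apply Rinv_0_lt_compat; lra) HV _
           (fun i => column_meets g n U i j)); [reflexivity|].
  intros z Hz. destruct (cont01_ivt g x y z g_cont Ix Iy Hz) as [w [Hw Hgw]].
  assert (Cw : column n j w).
  { destruct Cx, Cy. unfold column. unfold Rmin, Rmax in Hw. destruct Rle_dec.
    - split; [apply Rle_trans with (x * INR n) | apply Rle_trans with (y * INR n)];
        try apply Rmult_le_compat_r; lra.
    - split; [apply Rle_trans with (y * INR n) | apply Rle_trans with (x * INR n)];
        try apply Rmult_le_compat_r; lra. }
  pose proof (column_in01 n j w n_ge1 Hj Cw) as Iw.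
  destruct (U_cover (w, g w)) as [i [Hi Ui]]; [split; simpl; auto|].
  exists i. split; [auto|]. split; [exists w; auto | split; [auto | exists w; auto]].
Qed.

End GraphCover.

(* Column [j] of the graph of [u] fits in a box of width [1/n] and height [2 R_j]. *)
Lemma covers_by_graph_of_column_osc u n (Rj : nat -> R) (k : nat -> nat) : (1 <= n)%nat ->
  (forall j x, (j < n)%nat -> column n j x -> Rabs (u x - u (INR j / INR n)) <= Rj j) ->
  (forall j, (j < n)%nat -> 2 * Rj j * INR n <= INR (k j)) ->
  covers_by (graph u) (sqrt 2 / INR n) (nsum (fun j => S (k j)) n).
Proof.
  intros Hn HR Hk. assert (Hn1 : 1 <= INR n) by (apply (le_INR 1); lia).
  assert (Hinv : 0 < / INR n) by (apply Rinv_0_lt_compat; lra).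
  apply covers_by_family with (Fj := fun j p =>
      INR j / INR n <= fst p <= INR j / INR n + / INR n /\
      u (INR j / INR n) - Rj j <= snd p <= u (INR j / INR n) - Rj j + INR (k j) * / INR n).
  - intros j Hj. apply covers_by_column; auto.
  - intros [x y] [Hx Hy]. simpl in *. subst y.
    destruct (nat_floor n (x * INR n)) as [j [Hj [A B]]]; auto; [split; nra|].
    exists j. split; auto.
    specialize (HR j x Hj ltac:(unfold column; lra)). specialize (Hk j Hj).
    apply Rabs_le_between in HR.
    assert (INR (k j) * / INR n >= 2 * Rj j).
    { apply Rle_ge. apply Rmult_le_reg_r with (INR n); [lra|].
      replace (INR (k j) * / INR n * INR n) with (INR (k j)) by (field; lra). lra. }
    split; [|lra]. unfold Rdiv. split.
    + apply Rmult_le_reg_r with (INR n); [lra|]. rewrite Rmult_assoc, Rinv_l by lra. lra.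
    + apply Rmult_le_reg_r with (INR n); [lra|].
      rewrite Rmult_plus_distr_r, Rmult_assoc, Rinv_l by lra. lra.
Qed.

Lemma column_dist_left_end n j x : (1 <= n)%nat -> column n j x ->
  Rabs (x - INR j / INR n) <= / INR n.
Proof.
  intros Hn [A B]. assert (1 <= INR n) by (apply (le_INR 1); lia).
  apply Rabs_le. split; apply Rmult_le_reg_r with (INR n); try lra;
    replace ((x - INR j / INR n) * INR n) with (x * INR n - INR j) by (field; lra);
    [replace (- / INR n * INR n) with (-1) by (field; lra) | rewrite Rinv_l by lra]; lra.
Qed.

(** * Box dimension of graphs *)

Lemma upper_box_dim_graph_ge1 g : cont01 g -> Rbar_le (Finite 1) (upper_box_dim (graph g)).
Proof.
  intros Hg. apply upper_box_dim_ge. intros eps e He He0.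
  assert (Hl5 : 0 < ln 5) by (rewrite <- ln_1; apply ln_increasing; lra).
  destruct (nat_above (/ e + exp (ln 5 / eps) + 2)) as [n [Hn _]].
  pose proof (Rinv_0_lt_compat e He0). pose proof (exp_pos (ln 5 / eps)).
  assert (Hn1 : (1 <= n)%nat) by (apply (INR_le 1); simpl; lra).
  exists (/ INR n). split; [split|split].
  - apply Rinv_0_lt_compat; lra.
  - rewrite <- (Rinv_inv e). apply Rinv_lt_contravar; [apply Rmult_lt_0_compat|]; lra.
  - rewrite <- Rinv_1. apply Rinv_lt_contravar; lra.
  - intros c [U [HU1 HU2]].
    pose proof (column_count_sum_le g n c U Hn1 HU1) as A.
    pose proof (column_count_sum_ge g n c U Hn1 HU2) as B.
    assert (Hc5 : INR n <= 5 * INR c)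
      by (replace 5 with (INR 5) by (simpl; lra); rewrite <- mult_INR; apply le_INR; lia).
    rewrite ln_Rinv, Ropp_involutive by lra.
    assert (ln (INR n) <= ln 5 + ln (INR c)).
    { rewrite <- ln_mult by (try lra; apply lt_0_INR; lia). apply ln_le; lra. }
    assert (ln (exp (ln 5 / eps)) <= ln (INR n)) by (apply ln_le; lra).
    rewrite ln_exp in H2. assert (eps * (ln 5 / eps) = ln 5) by (field; lra). nra.
Qed.

Lemma graph_grid_covers_of_dim_le g D eps : 0 < eps ->
  Rbar_le (upper_box_dim (graph g)) (Finite D) ->
  exists n0 : nat, forall n, (n0 <= n)%nat ->
    exists N U, (forall i, (i < N)%nat -> diam_le (U i) (/ INR n)) /\
      (forall p, graph g p -> exists i, (i < N)%nat /\ U i p) /\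
      ln (INR N) <= (D + eps) * ln (INR n).
Proof.
  intros He HD. destruct (upper_box_dim_le_elim _ D HD eps He) as [e [He0 Hr]].
  destruct (nat_above (/ e + 2)) as [n0 [Hn0 _]]. pose proof (Rinv_0_lt_compat e He0).
  exists n0. intros n Hn. assert (INR n0 <= INR n) by (apply le_INR; auto).
  assert (Hd : 0 < / INR n < 1) by (split; [apply Rinv_0_lt_compat | rewrite <- Rinv_1;
                                              apply Rinv_lt_contravar]; lra).
  assert (Hde : / INR n < e).
  { rewrite <- (Rinv_inv e). apply Rinv_lt_contravar; [apply Rmult_lt_0_compat|]; lra. }
  destruct (covers_of_box_ratio_le _ _ _ Hd (Hr _ (conj (proj1 Hd) Hde)))
    as [N [[U [HU1 HU2]] HN]].
  exists N, U. repeat split; auto. rewrite ln_Rinv, Ropp_involutive in HN by lra. exact HN.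
Qed.

Lemma ln_add_le a b r : 1 <= a -> 1 <= b -> ln a <= r -> ln b <= r -> ln (a + b) <= ln 2 + r.
Proof.
  intros Ha Hb Har Hbr. destruct (Rle_dec a b).
  - assert (ln (a + b) <= ln (2 * b)) by (apply ln_le; lra). rewrite ln_mult in H by lra. lra.
  - assert (ln (a + b) <= ln (2 * a)) by (apply ln_le; lra). rewrite ln_mult in H by lra. lra.
Qed.

(* Cover column [j] of the graph of [u] by boxes of height [2 C (c1 j + c2 j) / n], where [c1 j]
   and [c2 j] count the sets of optimal covers of the graphs of [g1] and [g2] meeting column [j]. *)
Lemma upper_box_dim_graph_le_osc u C g1 g2 D : 0 <= D -> 0 <= C -> cont01 g1 -> cont01 g2 ->
  osc_le u C g1 g2 ->
  Rbar_le (upper_box_dim (graph g1)) (Finite D) -> Rbar_le (upper_box_dim (graph g2)) (Finite D) ->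
  Rbar_le (upper_box_dim (graph u)) (Finite D).
Proof.
  intros HD HC H1 H2 Hu D1 D2. apply Rbar_le_of_le_plus_eps. intros eps He.
  destruct (graph_grid_covers_of_dim_le g1 D eps He D1) as [n1 G1].
  destruct (graph_grid_covers_of_dim_le g2 D eps He D2) as [n2 G2].
  destruct (nat_above C) as [K [HK _]].
  apply upper_box_dim_le_of_grid with (K := ln (INR (10 * K + 5)) + ln 2) (n0 := max n1 n2); [lra|].
  intros n Hn Hn1. assert (Hn1R : 1 <= INR n) by (apply (le_INR 1); lia).
  destruct (G1 n ltac:(lia)) as [N1 [U1 [A1 [B1 L1]]]], (G2 n ltac:(lia)) as [N2 [U2 [A2 [B2 L2]]]].
  pose proof (column_count_sum_le g1 n N1 U1 Hn1 A1) as S1.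
  pose proof (column_count_sum_ge g1 n N1 U1 Hn1 B1) as T1.
  pose proof (column_count_sum_le g2 n N2 U2 Hn1 A2) as S2.
  pose proof (column_count_sum_ge g2 n N2 U2 Hn1 B2) as T2.
  set (c1 := column_count g1 n U1 N1) in *. set (c2 := column_count g2 n U2 N2) in *.
  exists (nsum (fun j => S (2 * K * c1 j + 2 * K * c2 j)) n). split.
  - apply covers_by_graph_of_column_osc
      with (Rj := fun j => C * (INR (c1 j) / INR n + INR (c2 j) / INR n)); auto.
    + intros j x Hj Cx.
      eapply Rle_trans; [apply Hu; apply (column_in01 n j); auto; apply column_left_end; auto|].
      apply Rmult_le_compat_l; auto.
      apply Rplus_le_compat; apply column_osc_le; auto; apply column_left_end; auto.
    + intros j Hj. rewrite plus_INR, !mult_INR.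
      replace (2 * (C * (INR (c1 j) / INR n + INR (c2 j) / INR n)) * INR n)
        with (2 * C * (INR (c1 j) + INR (c2 j))) by (field; lra).
      simpl INR. pose proof (pos_INR (c1 j)); pose proof (pos_INR (c2 j)). nra.
  - assert (Hsum : nsum (fun j => S (2 * K * c1 j + 2 * K * c2 j)) n
                  = (2 * K * nsum c1 n + 2 * K * nsum c2 n + n)%nat).
    { rewrite (nsum_ext _ (fun j => (2 * K * c1 j + 2 * K * c2 j) + 1)%nat) by (intros; lia).
      rewrite !nsum_add, !nsum_scal, nsum_const. lia. }
    rewrite Hsum.
    assert (Hcnt : (2 * K * nsum c1 n + 2 * K * nsum c2 n + n <= (10 * K + 5) * (N1 + N2))%nat)
      by nia.
    assert (HN : (1 <= N1 /\ 1 <= N2)%nat) by lia.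
    apply le_INR in Hcnt. rewrite mult_INR, (plus_INR N1) in Hcnt.
    assert (H10 : 1 <= INR (10 * K + 5)) by (apply (le_INR 1); lia).
    assert (HN1 : 1 <= INR N1) by (apply (le_INR 1); lia).
    assert (HN2 : 1 <= INR N2) by (apply (le_INR 1); lia).
    eapply Rle_trans; [apply ln_le; [apply lt_0_INR; lia | exact Hcnt]|].
    rewrite ln_mult by lra. pose proof (ln_add_le _ _ _ HN1 HN2 L1 L2). lra.
Qed.

(** * A Takagi-type function with graph of prescribed dimension *)

Definition dist_Z (x : R) : R := Rmin (x - IZR (up x - 1)) (IZR (up x) - x).

Lemma dist_Z_spec x :
  (forall z, dist_Z x <= Rabs (x - IZR z)) /\ (exists z, dist_Z x = Rabs (x - IZR z)).
Proof.
  destruct (archimed x) as [H1 H2]. unfold dist_Z. rewrite minus_IZR. split.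
  - intros z. destruct (Z_le_gt_dec z (up x - 1)) as [Hz|Hz].
    + apply IZR_le in Hz. rewrite minus_IZR in Hz. rewrite Rabs_pos_eq by lra.
      eapply Rle_trans; [apply Rmin_l|]. lra.
    + assert (up x <= z)%Z by lia. apply IZR_le in H. rewrite Rabs_left1 by lra.
      eapply Rle_trans; [apply Rmin_r|]. lra.
  - unfold Rmin. destruct Rle_dec.
    + exists (up x - 1)%Z. rewrite minus_IZR, Rabs_pos_eq by lra. reflexivity.
    + exists (up x). rewrite Rabs_left1 by lra. lra.
Qed.

Lemma dist_Z_range x : 0 <= dist_Z x <= 1/2.
Proof.
  destruct (archimed x) as [H1 H2]. unfold dist_Z. rewrite minus_IZR.
  unfold Rmin; destruct Rle_dec; lra.
Qed.

Lemma dist_Z_lip x y : Rabs (dist_Z x - dist_Z y) <= Rabs (x - y).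
Proof.
  destruct (dist_Z_spec x) as [Ax [zx Bx]], (dist_Z_spec y) as [Ay [zy By]].
  specialize (Ax zy). specialize (Ay zx).
  pose proof (Rabs_triang (y - IZR zy) (x - y)). pose proof (Rabs_triang (x - IZR zx) (y - x)).
  replace (y - IZR zy + (x - y)) with (x - IZR zy) in H by ring.
  replace (x - IZR zx + (y - x)) with (y - IZR zx) in H0 by ring.
  rewrite (Rabs_minus_sym y x) in H0.
  apply Rabs_le. lra.
Qed.

Lemma dist_Z_INR q : dist_Z (INR q) = 0.
Proof.
  rewrite INR_IZR_INZ. destruct (dist_Z_spec (IZR (Z.of_nat q))) as [A _].
  specialize (A (Z.of_nat q)). rewrite Rminus_diag, Rabs_R0 in A.
  pose proof (dist_Z_range (IZR (Z.of_nat q))). lra.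
Qed.

Lemma dist_Z_half q : dist_Z (INR q + 1/2) = 1/2.
Proof.
  pose proof (dist_Z_range (INR q + 1/2)) as Hr.
  destruct (dist_Z_spec (INR q + 1/2)) as [_ [z Hz]].
  rewrite Hz in *. rewrite INR_IZR_INZ in *.
  destruct (Z_le_gt_dec z (Z.of_nat q)) as [Hq|Hq].
  - apply IZR_le in Hq. rewrite Rabs_pos_eq in * by lra. lra.
  - assert (Z.of_nat q + 1 <= z)%Z by lia. apply IZR_le in H. rewrite plus_IZR in H.
    rewrite Rabs_left1 in * by lra. lra.
Qed.

Lemma exp_pow_INR a N : exp a ^ N = exp (INR N * a).
Proof.
  induction N as [|N IH]; [simpl; rewrite Rmult_0_l, exp_0; auto|].
  simpl pow. rewrite IH, S_INR, <- exp_plus. f_equal. ring.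
Qed.

Lemma exp_le_exp x y : x <= y -> exp x <= exp y.
Proof. intros [H|H]; [left; apply exp_increasing; exact H | right; now rewrite H]. Qed.

Lemma ln2_pos : 0 < ln 2.
Proof. rewrite <- ln_1; apply ln_increasing; lra. Qed.

Lemma pow_le_1 s n : 0 <= s <= 1 -> s ^ n <= 1.
Proof. intros Hs. rewrite <- (pow1 n). apply pow_incr; lra. Qed.

Lemma pow_le_antimono s N M : 0 < s <= 1 -> (N <= M)%nat -> s ^ M <= s ^ N.
Proof.
  intros Hs HNM. replace M with (N + (M - N))%nat by lia. rewrite pow_add.
  pose proof (pow_lt _ N (proj1 Hs)). assert (s ^ (M - N) <= 1) by (apply pow_le_1; lra). nra.
Qed.

Lemma pow2_ge_succ k : INR k + 1 <= 2 ^ k.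
Proof. induction k; [simpl; lra|]. rewrite S_INR. simpl. pose proof (pos_INR k). lra. Qed.

Lemma half_pow_le k : (1/2) ^ k <= / (INR k + 1).
Proof.
  replace (1/2) with (/ 2) by field. rewrite pow_inv. apply Rinv_le_contravar.
  - pose proof (pos_INR k); lra.
  - apply pow2_ge_succ.
Qed.

Lemma is_series_geom_half : is_series (fun n => (1/2) ^ n) 2.
Proof.
  assert (H : Rabs (1/2) < 1) by (rewrite Rabs_pos_eq; lra).
  pose proof (is_series_geom (1/2) H) as H0. now replace (/ (1 - 1/2)) with 2 in H0 by field.
Qed.

Lemma Series_eq_0 a : (forall n, a n = 0) -> Series a = 0.
Proof.
  intros H. rewrite (Series_ext a (fun n => 0 * (1/2) ^ n)) by (intros; rewrite H; ring).
  rewrite Series_scal_l. ring.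
Qed.

Section Takagi.
Variable b : R.
Hypothesis b_range : 1 < b <= 2.

(* At scale [1 / freq k] the graph oscillates by about
   [amp k] in every column, so about [freq k ^ b * 2^-k] boxes are needed; the quadratic growth
   of [expo k] makes the factor [2^-k] negligible and the earlier terms comparatively flat. *)
Definition amp_base : R := Rpower 2 (b - 2).
Definition slope_base : R := Rpower 2 (b - 1).
Definition gap : nat := Z.to_nat (up (2 / (b - 1))).
Definition expo (k : nat) : nat := (gap * (k * k + k))%nat.
Definition freq (k : nat) : R := 2 ^ expo k.
Definition amp (k : nat) : R := (1/2) ^ k * amp_base ^ expo k.
Definition lip_partial (k : nat) : R := sum_f_R0 (fun i => amp i * freq i) k.
Definition takagi_term (x : R) (k : nat) : R := amp k * dist_Z (freq k * x).
Definition takagi (x : R) : R := Series (takagi_term x).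

Lemma gap_spec : (1 <= gap)%nat /\ 2 <= INR gap * (b - 1).
Proof.
  unfold gap. destruct (archimed (2 / (b - 1))) as [H1 H2].
  assert (2 <= 2 / (b - 1)).
  { apply Rmult_le_reg_r with (b - 1); [lra|]. unfold Rdiv. rewrite Rmult_assoc, Rinv_l by lra. nra. }
  assert (0 < up (2 / (b - 1)))%Z by (apply lt_IZR; lra).
  rewrite INR_IZR_INZ, Z2Nat.id by lia. split; [lia|].
  assert (2 / (b - 1) * (b - 1) = 2) by (field; lra). nra.
Qed.

Lemma amp_base_range : 0 < amp_base <= 1.
Proof.
  unfold amp_base, Rpower. split; [apply exp_pos|]. rewrite <- exp_0.
  apply exp_le_exp. pose proof ln2_pos. nra.
Qed.

Lemma slope_base_eq : slope_base = 2 * amp_base.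
Proof.
  unfold slope_base, amp_base, Rpower. rewrite <- (exp_ln 2) at 2 by lra.
  rewrite <- exp_plus. f_equal. ring.
Qed.

Lemma slope_base_ge1 : 1 <= slope_base.
Proof.
  unfold slope_base, Rpower. apply Rle_trans with (exp 0); [rewrite exp_0; lra|].
  apply exp_le_exp. pose proof ln2_pos. nra.
Qed.

Lemma slope_base_pow_gap : 4 <= slope_base ^ gap.
Proof.
  destruct gap_spec as [_ H]. unfold slope_base, Rpower. rewrite exp_pow_INR.
  replace 4 with (exp (ln 2) ^ 2) by (rewrite exp_ln by lra; ring). rewrite exp_pow_INR.
  replace (INR 2) with 2 by (simpl; ring). apply exp_le_exp. pose proof ln2_pos. nra.
Qed.

Lemma expo_S k : expo (S k) = (expo k + gap * (2 * k + 2))%nat.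
Proof. unfold expo. nia. Qed.

Lemma expo_ge k : (k * k <= expo k)%nat.
Proof. destruct gap_spec as [H _]. unfold expo. nia. Qed.

Lemma expo_mono k l : (k <= l)%nat -> (expo k <= expo l)%nat.
Proof. intros H. unfold expo. apply Nat.mul_le_mono_l. nia. Qed.

Lemma freq_pos k : 0 < freq k.
Proof. unfold freq. apply pow_lt; lra. Qed.

Lemma freq_ge k : INR k + 1 <= freq k.
Proof.
  unfold freq. eapply Rle_trans; [apply pow2_ge_succ|]. apply Rle_pow; [lra|].
  pose proof (expo_ge k). nia.
Qed.

Lemma ln_freq k : ln (freq k) = INR (expo k) * ln 2.
Proof. unfold freq. apply ln_pow. lra. Qed.

Lemma freq_ratio i k : (k <= i)%nat -> freq i = 2 ^ (expo i - expo k) * freq k.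
Proof. intros H. unfold freq. rewrite <- pow_add. f_equal. pose proof (expo_mono k i H). lia. Qed.

Lemma amp_pos k : 0 < amp k.
Proof. unfold amp. pose proof amp_base_range. apply Rmult_lt_0_compat; apply pow_lt; lra. Qed.

Lemma amp_le k : amp k <= (1/2) ^ k.
Proof.
  unfold amp. pose proof amp_base_range. pose proof (pow_lt (1/2) k ltac:(lra)).
  assert (amp_base ^ expo k <= 1) by (apply pow_le_1; lra).
  pose proof (pow_lt amp_base (expo k) ltac:(lra)). nra.
Qed.

Lemma amp_shift k i : amp (k + i) <= amp k * (1/2) ^ i.
Proof.
  unfold amp. rewrite pow_add. pose proof amp_base_range.
  assert (amp_base ^ expo (k + i) <= amp_base ^ expo k)
    by (apply pow_le_antimono; auto; apply expo_mono; lia).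
  pose proof (pow_lt (1/2) k ltac:(lra)). pose proof (pow_lt (1/2) i ltac:(lra)).
  replace ((1/2) ^ k * amp_base ^ expo k * (1/2) ^ i)
    with ((1/2) ^ k * (1/2) ^ i * amp_base ^ expo k) by ring.
  apply Rmult_le_compat_l; auto. apply Rmult_le_pos; lra.
Qed.

Lemma amp_freq k : amp k * freq k = (1/2) ^ k * slope_base ^ expo k.
Proof. unfold amp, freq. rewrite slope_base_eq, Rpow_mult_distr. ring. Qed.

Lemma slope_base_growth k : 16 ^ S k * slope_base ^ expo k <= slope_base ^ expo (S k).
Proof.
  rewrite expo_S, pow_add. pose proof slope_base_ge1. pose proof slope_base_pow_gap.
  pose proof (pow_lt slope_base (expo k) ltac:(lra)).
  rewrite Rmult_comm. apply Rmult_le_compat_l; [lra|].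
  replace (gap * (2 * k + 2))%nat with (gap * (2 * S k))%nat by lia.
  rewrite pow_mult. replace 16 with (4 ^ 2) by ring. rewrite <- pow_mult.
  apply pow_incr. split; lra.
Qed.

Lemma lip_partial_nonneg k : 0 <= lip_partial k.
Proof.
  apply cond_pos_sum. intros i. rewrite amp_freq. pose proof slope_base_ge1.
  apply Rmult_le_pos; apply pow_le; lra.
Qed.

Lemma lip_partial_le k : lip_partial k <= 2 * slope_base ^ expo k.
Proof.
  pose proof slope_base_ge1. induction k as [|k IH].
  - unfold lip_partial. simpl. rewrite amp_freq. unfold expo. rewrite Nat.mul_0_r. simpl. lra.
  - unfold lip_partial in *. simpl. rewrite amp_freq. pose proof (slope_base_growth k).
    assert (16 <= 16 ^ S k) by (rewrite <- (pow_1 16) at 1; apply Rle_pow; [lra|lia]).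
    pose proof (pow_lt slope_base (expo k) ltac:(lra)).
    assert ((1/2) ^ S k <= 1) by (apply pow_le_1; lra).
    pose proof (pow_lt (1/2) (S k) ltac:(lra)). pose proof (pow_lt slope_base (expo (S k)) ltac:(lra)).
    assert ((1/2) ^ S k * slope_base ^ expo (S k) <= slope_base ^ expo (S k)) by nra.
    nra.
Qed.

Lemma lip_partial_le_jump k : 4 * lip_partial k <= amp (S k) * freq (S k).
Proof.
  rewrite amp_freq. pose proof (lip_partial_le k). pose proof (slope_base_growth k).
  pose proof (pow_lt slope_base (expo k) ltac:(pose proof slope_base_ge1; lra)).
  assert (8 <= (1/2) ^ S k * 16 ^ S k).
  { rewrite <- Rpow_mult_distr. replace (1/2 * 16) with 8 by field.
    rewrite <- (pow_1 8) at 1. apply Rle_pow; [lra|lia]. }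
  pose proof (pow_lt (1/2) (S k) ltac:(lra)).
  apply Rle_trans with ((1/2) ^ S k * (16 ^ S k * slope_base ^ expo k)); [nra|].
  apply Rmult_le_compat_l; lra.
Qed.

Lemma takagi_term_range x k : 0 <= takagi_term x k <= amp k / 2.
Proof.
  unfold takagi_term. pose proof (dist_Z_range (freq k * x)). pose proof (amp_pos k). split; nra.
Qed.

Lemma ex_series_takagi_tail x k : ex_series (fun i => takagi_term x (k + i)).
Proof.
  apply (ex_series_le (fun i => takagi_term x (k + i)) (fun n => (1/2) ^ n));
    [|eexists; apply is_series_geom_half].
  intros n. change (norm (takagi_term x (k + n))) with (Rabs (takagi_term x (k + n))).
  pose proof (takagi_term_range x (k + n)). rewrite Rabs_pos_eq by lra.
  pose proof (amp_le (k + n)). rewrite pow_add in H0.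
  assert ((1/2) ^ k <= 1) by (apply pow_le_1; lra).
  pose proof (pow_lt (1/2) n ltac:(lra)). pose proof (pow_lt (1/2) k ltac:(lra)). nra.
Qed.

Lemma takagi_split x k :
  takagi x = sum_f_R0 (takagi_term x) k + Series (fun i => takagi_term x (S k + i)).
Proof.
  unfold takagi. rewrite (Series_incr_n _ (S k)); [reflexivity|lia|].
  exact (ex_series_takagi_tail x 0).
Qed.

Lemma takagi_tail_range x k : 0 <= Series (fun i => takagi_term x (S k + i)) <= amp (S k).
Proof.
  pose proof (is_series_unique _ _ is_series_geom_half) as Hgeom.
  split.
  - rewrite <- (Rmult_0_l 2), <- Hgeom, <- Series_scal_l.
    apply Series_le; [|apply ex_series_takagi_tail].
    intros n. rewrite Rmult_0_l. split; [lra | apply takagi_term_range].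
  - replace (amp (S k)) with (amp (S k) / 2 * Series (fun n => (1/2) ^ n)) by (rewrite Hgeom; field).
    rewrite <- Series_scal_l. apply Series_le.
    + intros n. pose proof (takagi_term_range x (S k + n)). split; [lra|].
      pose proof (amp_shift (S k) n). lra.
    + apply (ex_series_scal_l (amp (S k) / 2) (fun n => (1/2) ^ n)).
      eexists; apply is_series_geom_half.
Qed.

Lemma takagi_term_lip x y i :
  Rabs (takagi_term x i - takagi_term y i) <= amp i * freq i * Rabs (x - y).
Proof.
  unfold takagi_term. pose proof (amp_pos i). pose proof (freq_pos i).
  rewrite <- Rmult_minus_distr_l, Rabs_mult, Rabs_pos_eq by lra. rewrite Rmult_assoc.
  apply Rmult_le_compat_l; [lra|]. eapply Rle_trans; [apply dist_Z_lip|].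
  rewrite <- Rmult_minus_distr_l, Rabs_mult, Rabs_pos_eq by lra. lra.
Qed.

Lemma takagi_partial_lip x y k :
  Rabs (sum_f_R0 (takagi_term x) k - sum_f_R0 (takagi_term y) k) <= lip_partial k * Rabs (x - y).
Proof.
  unfold lip_partial. induction k as [|k IH]; simpl; [apply takagi_term_lip|].
  replace (sum_f_R0 (takagi_term x) k + takagi_term x (S k)
           - (sum_f_R0 (takagi_term y) k + takagi_term y (S k)))
    with ((sum_f_R0 (takagi_term x) k - sum_f_R0 (takagi_term y) k)
          + (takagi_term x (S k) - takagi_term y (S k))) by ring.
  eapply Rle_trans; [apply Rabs_triang|]. rewrite Rmult_plus_distr_r.
  apply Rplus_le_compat; [exact IH | apply takagi_term_lip].
Qed.

Lemma takagi_osc_le x y k :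
  Rabs (takagi x - takagi y) <= lip_partial k * Rabs (x - y) + amp (S k).
Proof.
  rewrite (takagi_split x k), (takagi_split y k).
  pose proof (takagi_partial_lip x y k). pose proof (takagi_tail_range x k).
  pose proof (takagi_tail_range y k). apply Rabs_le_between in H. apply Rabs_le. lra.
Qed.

Lemma takagi_range x : 0 <= takagi x <= 1.
Proof.
  rewrite (takagi_split x 0). simpl. pose proof (takagi_term_range x 0).
  pose proof (takagi_tail_range x 0). pose proof (amp_le 0). pose proof (amp_le 1). simpl in *. lra.
Qed.

Lemma takagi_cont01 : cont01 takagi.
Proof.
  intros x _ eps He.
  destruct (nat_above (2 / eps)) as [k [Hk _]].
  assert (Ha : amp (S k) < eps / 2).
  { eapply Rle_lt_trans; [apply amp_le|]. eapply Rle_lt_trans; [apply half_pow_le|].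
    rewrite S_INR. pose proof (pos_INR k).
    apply Rmult_lt_reg_r with ((INR k + 1 + 1) * (2 / eps)).
    { apply Rmult_lt_0_compat; [lra|apply Rdiv_lt_0_compat; lra]. }
    replace (/ (INR k + 1 + 1) * ((INR k + 1 + 1) * (2 / eps))) with (2 / eps) by (field; lra).
    replace (eps / 2 * ((INR k + 1 + 1) * (2 / eps))) with (INR k + 1 + 1) by (field; lra). lra. }
  pose proof (lip_partial_nonneg k) as HL.
  exists (eps / (2 * (lip_partial k + 1))). split; [apply Rdiv_lt_0_compat; lra|].
  intros y _ Hy. pose proof (takagi_osc_le y x k).
  assert (lip_partial k * Rabs (y - x) <= lip_partial k * (eps / (2 * (lip_partial k + 1))))
    by (apply Rmult_le_compat_l; lra).
  assert (lip_partial k * (eps / (2 * (lip_partial k + 1))) < eps / 2).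
  { apply Rmult_lt_reg_r with (2 * (lip_partial k + 1)); [lra|].
    replace (lip_partial k * (eps / (2 * (lip_partial k + 1))) * (2 * (lip_partial k + 1)))
      with (lip_partial k * eps) by (field; lra). nra. }
  lra.
Qed.

(* For [i > k], [freq i / (2 * freq k)] is an integer. *)
Lemma takagi_term_dyadic q k i : (k < i)%nat -> takagi_term (INR q / (2 * freq k)) i = 0.
Proof.
  intros Hi. unfold takagi_term. pose proof (freq_pos k).
  assert (Hd : (2 <= expo i - expo k)%nat).
  { pose proof (expo_mono (S k) i Hi). rewrite expo_S in H0. destruct gap_spec. nia. }
  rewrite (freq_ratio i k ltac:(lia)).
  replace (expo i - expo k)%nat with (S (expo i - expo k - 1)) by lia.
  replace (2 ^ S (expo i - expo k - 1) * freq k * (INR q / (2 * freq k)))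
    with (INR (2 ^ (expo i - expo k - 1) * q))
    by (rewrite mult_INR, pow_INR, <- tech_pow_Rmult; replace (INR 2) with 2 by (simpl; lra);
        field; lra).
  rewrite dist_Z_INR. ring.
Qed.

Lemma takagi_dyadic q k :
  takagi (INR q / (2 * freq k)) = sum_f_R0 (takagi_term (INR q / (2 * freq k))) k.
Proof.
  rewrite (takagi_split _ k), (Series_eq_0 (fun i => takagi_term _ (S k + i))); [ring|].
  intros; apply takagi_term_dyadic; lia.
Qed.

(* The [k]-th term jumps by [amp k / 2] over half a period, while the earlier terms,
   with Lipschitz constant [lip_partial (k - 1)], move by at most [amp k / 8]. *)
Lemma takagi_jump k j : (1 <= k)%nat ->
  takagi ((INR j + 1/2) / freq k) - takagi (INR j / freq k) >= amp k / 4.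
Proof.
  intros Hk. destruct k as [|k]; [lia|]. pose proof (freq_pos (S k)) as Hm.
  replace (INR j / freq (S k)) with (INR (2 * j) / (2 * freq (S k)))
    by (rewrite mult_INR; simpl; field; lra).
  replace ((INR j + 1/2) / freq (S k)) with (INR (2 * j + 1) / (2 * freq (S k)))
    by (rewrite plus_INR, mult_INR; simpl; field; lra).
  rewrite !takagi_dyadic, !tech5.
  set (x1 := INR (2 * j) / (2 * freq (S k))). set (x2 := INR (2 * j + 1) / (2 * freq (S k))).
  assert (E1 : takagi_term x1 (S k) = 0).
  { unfold takagi_term, x1. replace (freq (S k) * (INR (2 * j) / (2 * freq (S k)))) with (INR j)
      by (rewrite mult_INR; simpl; field; lra). rewrite dist_Z_INR. ring. }
  assert (E2 : takagi_term x2 (S k) = amp (S k) / 2).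
  { unfold takagi_term, x2. replace (freq (S k) * (INR (2 * j + 1) / (2 * freq (S k))))
      with (INR j + 1/2) by (rewrite plus_INR, mult_INR; simpl; field; lra).
    rewrite dist_Z_half. field. }
  assert (Hx : Rabs (x2 - x1) = / (2 * freq (S k))).
  { replace (x2 - x1) with (/ (2 * freq (S k)))
      by (unfold x1, x2; rewrite plus_INR; change (INR 1) with 1; field; lra).
    apply Rabs_pos_eq. left; apply Rinv_0_lt_compat; lra. }
  pose proof (takagi_partial_lip x2 x1 k) as HP. rewrite Hx in HP. apply Rabs_le_between in HP.
  pose proof (lip_partial_le_jump k).
  assert (lip_partial k * / (2 * freq (S k)) <= amp (S k) / 8).
  { apply Rmult_le_reg_r with (2 * freq (S k)); [lra|].
    replace (lip_partial k * / (2 * freq (S k)) * (2 * freq (S k))) with (lip_partial k)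
      by (field; lra). lra. }
  rewrite E1, E2. lra.
Qed.

Lemma freq_INR k : freq k = INR (2 ^ expo k).
Proof. unfold freq. rewrite pow_INR. reflexivity. Qed.

Lemma ln_amp k : ln (amp k) = (INR (expo k) * (b - 2) - INR k) * ln 2.
Proof.
  pose proof amp_base_range. unfold amp.
  rewrite ln_mult, !ln_pow by (try apply pow_lt; lra).
  unfold amp_base. rewrite ln_Rpower. unfold Rdiv. rewrite Rmult_1_l, ln_Rinv by lra. ring.
Qed.

(* Each column of width [1 / freq k] contains a jump of size [amp k / 4]. *)
Lemma takagi_cover_count_ge k c : (1 <= k)%nat ->
  covers_by (graph takagi) (/ freq k) c -> freq k * freq k * amp k <= 20 * INR c.
Proof.
  intros Hk [U [HU1 HU2]]. pose proof (freq_pos k) as Hm. pose proof (freq_ge k) as Hm1.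
  set (M := (2 ^ expo k)%nat).
  assert (HM : freq k = INR M) by apply freq_INR. rewrite HM in *.
  assert (HM1 : (1 <= M)%nat) by (apply (INR_le 1); simpl; pose proof (pos_INR k); lra).
  pose proof (column_count_sum_le takagi M c U HM1 HU1) as S5.
  assert (Hcj : forall j, (j < M)%nat -> INR M * amp k / 4 <= INR (column_count takagi M U c j)).
  { intros j Hj.
    assert (Hosc := column_osc_le takagi M c U HM1 takagi_cont01 HU1 HU2 j
                      ((INR j + 1/2) / INR M) (INR j / INR M) Hj).
    pose proof (takagi_jump k j Hk) as HJ. rewrite HM in HJ.
    rewrite Rabs_pos_eq in Hosc by (pose proof (amp_pos k); lra).
    assert (HJ' : amp k / 4 <= INR (column_count takagi M U c j) / INR M).
    { eapply Rle_trans; [|apply Hosc; [|apply column_left_end; auto]]; [lra|].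
      unfold column. replace ((INR j + 1/2) / INR M * INR M) with (INR j + 1/2) by (field; lra). lra. }
    apply Rmult_le_reg_r with (/ INR M); [apply Rinv_0_lt_compat; lra|].
    replace (INR M * amp k / 4 * / INR M) with (amp k / 4) by (field; lra). exact HJ'. }
  pose proof (nsum_ge_INR _ M _ Hcj) as Hsum.
  apply le_INR in S5. rewrite mult_INR in S5. simpl INR in S5. lra.
Qed.

Lemma takagi_dim_ge : Rbar_le (Finite b) (upper_box_dim (graph takagi)).
Proof.
  apply upper_box_dim_ge. intros eps e He He0. pose proof ln2_pos as L2.
  destruct (nat_above (5 + 2 / eps + / e)) as [k [Hk _]].
  pose proof (Rdiv_lt_0_compat 2 eps ltac:(lra) He). pose proof (Rinv_0_lt_compat e He0).
  assert (Hk1 : (1 <= k)%nat) by (apply (INR_le 1); simpl; lra).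
  pose proof (freq_ge k) as Hmk. pose proof (freq_pos k) as Hmp.
  exists (/ freq k). split; [split|split].
  - apply Rinv_0_lt_compat; lra.
  - rewrite <- (Rinv_inv e). apply Rinv_lt_contravar; [apply Rmult_lt_0_compat|]; lra.
  - rewrite <- Rinv_1. apply Rinv_lt_contravar; lra.
  - intros c Hc. pose proof (takagi_cover_count_ge k c Hk1 Hc) as Hcnt.
    pose proof (amp_pos k) as Ha.
    assert (Hff : 0 < freq k * freq k) by nra.
    assert (Hffa : 0 < freq k * freq k * amp k) by nra.
    assert (Hc20 : freq k * freq k * amp k * / 20 <= INR c) by lra.
    apply ln_le in Hc20; [|apply Rmult_lt_0_compat; lra].
    rewrite !ln_mult, ln_Rinv, ln_amp, ln_freq in Hc20 by (try apply Rinv_0_lt_compat; lra).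
    rewrite ln_Rinv, Ropp_involutive, ln_freq by lra.
    assert (H20 : ln 20 <= 5 * ln 2).
    { replace (5 * ln 2) with (INR 5 * ln 2) by (simpl; ring). rewrite <- ln_pow by lra.
      apply ln_le; simpl; lra. }
    pose proof (expo_ge k) as Hkk. apply le_INR in Hkk. rewrite mult_INR in Hkk.
    assert (Hek : 2 <= eps * INR k).
    { apply Rmult_le_reg_r with (/ eps); [apply Rinv_0_lt_compat; lra|].
      replace (eps * INR k * / eps) with (INR k) by (field; lra). unfold Rdiv in *. lra. }
    assert (eps * INR (expo k) >= INR k + 5) by (pose proof (pos_INR k); nra).
    nra.
Qed.

Lemma freq_bracket (n : R) : 1 <= n -> exists k, freq k <= n < freq (S k).
Proof.
  intros Hn.
  assert (H : forall K, n < freq K -> exists k, freq k <= n < freq (S k)).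
  { induction K as [|K IH]; intros HK.
    - unfold freq, expo in HK. rewrite Nat.mul_0_r in HK. simpl in HK. lra.
    - destruct (Rlt_dec n (freq K)); auto. exists K; lra. }
  destruct (nat_above n) as [K [HK _]]. apply (H K). pose proof (freq_ge K). lra.
Qed.

Lemma slope_base_pow_expo k : slope_base ^ expo k = Rpower (freq k) (b - 1).
Proof. unfold slope_base, Rpower. rewrite exp_pow_INR, ln_freq. f_equal. ring. Qed.

Lemma amp_base_pow_expo k : amp_base ^ expo k = Rpower (freq k) (b - 2).
Proof. unfold amp_base, Rpower. rewrite exp_pow_INR, ln_freq. f_equal. ring. Qed.

Lemma lip_partial_le_Rpower k n : freq k <= n -> lip_partial k <= 2 * Rpower n (b - 1).
Proof.
  intros Hkn. eapply Rle_trans; [apply lip_partial_le|]. rewrite slope_base_pow_expo.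
  apply Rmult_le_compat_l; [lra|]. apply Rle_Rpower_l; [lra | split; [apply freq_pos | exact Hkn]].
Qed.

(* Since [b <= 2], [amp (S k) <= freq (S k) ^ (b - 2) <= n ^ (b - 2)]. *)
Lemma amp_le_Rpower k n : 1 <= n -> n < freq (S k) -> amp (S k) * n <= Rpower n (b - 1).
Proof.
  intros Hn Hnk. unfold amp. rewrite amp_base_pow_expo.
  assert ((1/2) ^ S k <= 1) by (apply pow_le_1; lra). pose proof (pow_lt (1/2) (S k) ltac:(lra)).
  assert (Rpower (freq (S k)) (b - 2) <= Rpower n (b - 2)).
  { unfold Rpower. apply exp_le_exp.
    assert (ln n < ln (freq (S k))) by (apply ln_increasing; lra). nra. }
  assert (0 < Rpower (freq (S k)) (b - 2)) by apply exp_pos.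
  apply Rle_trans with (Rpower n (b - 2) * n); [apply Rmult_le_compat_r; nra|].
  rewrite <- (Rpower_1 n) at 2 by lra. rewrite <- Rpower_plus. right. f_equal. ring.
Qed.

(* At grid scale [1/n], with [freq k <= n < freq (S k)], the first [k] terms move by at most
   [lip_partial k / n] across a column and the tail by at most [amp (S k)]. *)
Lemma takagi_dim_le : Rbar_le (upper_box_dim (graph takagi)) (Finite b).
Proof.
  apply upper_box_dim_le_of_grid with (K := ln 8) (n0 := 1%nat); [lra|].
  intros n _ Hn1. assert (Hn : 1 <= INR n) by (apply (le_INR 1); auto).
  destruct (freq_bracket (INR n) Hn) as [k [Hk1 Hk2]].
  pose proof (amp_pos (S k)). pose proof (lip_partial_nonneg k).
  set (E := Rpower (INR n) (b - 1)).
  assert (A1 : lip_partial k <= 2 * E) by (apply lip_partial_le_Rpower; auto).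
  assert (A2 : amp (S k) * INR n <= E) by (apply amp_le_Rpower; auto).
  destruct (nat_above (2 * lip_partial k + 2 * amp (S k) * INR n)) as [h [Hh1 Hh2]].
  rewrite Rmax_right in Hh2 by nra.
  exists (nsum (fun _ => S h) n). split.
  - apply covers_by_graph_of_column_osc with (Rj := fun _ => lip_partial k / INR n + amp (S k));
      auto.
    + intros j x Hj Cx. eapply Rle_trans; [apply takagi_osc_le with (k := k)|].
      apply Rplus_le_compat_r. unfold Rdiv. apply Rmult_le_compat_l; auto.
      apply column_dist_left_end; auto.
    + intros j Hj.
      replace (2 * (lip_partial k / INR n + amp (S k)) * INR n)
        with (2 * lip_partial k + 2 * amp (S k) * INR n) by (field; lra). lra.
  - rewrite nsum_const, mult_INR, S_INR, ln_mult by (pose proof (pos_INR h); lra).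
    assert (HE : 1 <= E).
    { unfold E, Rpower. apply Rle_trans with (exp 0); [rewrite exp_0; lra|]. apply exp_le_exp.
      assert (0 <= ln (INR n)) by (rewrite <- ln_1; apply ln_le; lra). nra. }
    assert (ln (INR h + 1) <= ln (8 * E)) by (apply ln_le; [pose proof (pos_INR h) |]; lra).
    rewrite ln_mult in H1 by lra. unfold E in H1. rewrite ln_Rpower in H1. lra.
Qed.

End Takagi.

Lemma graph_of_dim_exists b : 1 < b <= 2 ->
  exists p : R -> R, cont01 p /\ (forall x, 0 <= p x <= 1) /\ upper_box_dim (graph p) = Finite b.
Proof.
  intros Hb. exists (takagi b). split; [apply takagi_cont01; auto|].
  split; [intros; apply takagi_range; auto|].
  apply Rbar_le_antisym; [apply takagi_dim_le | apply takagi_dim_ge]; auto.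
Qed.

Lemma osc_le_mul f g h Mg Mh :
  (forall x, 0 <= x <= 1 -> f x = g x * h x) ->
  (forall x, 0 <= x <= 1 -> Rabs (g x) <= Mg) -> (forall x, 0 <= x <= 1 -> Rabs (h x) <= Mh) ->
  osc_le f (Mg + Mh) g h.
Proof.
  intros Hf Bg Bh x y Hx Hy. rewrite (Hf x Hx), (Hf y Hy).
  replace (g x * h x - g y * h y) with (g x * (h x - h y) + h y * (g x - g y)) by ring.
  eapply Rle_trans; [apply Rabs_triang|]. rewrite !Rabs_mult.
  pose proof (Bg x Hx). pose proof (Bh y Hy).
  pose proof (Rabs_pos (h x - h y)). pose proof (Rabs_pos (g x - g y)).
  pose proof (Rabs_pos (g x)). pose proof (Rabs_pos (h y)). nra.
Qed.

Lemma osc_le_div A B MA mB : 0 <= MA -> 0 < mB ->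
  (forall x, 0 <= x <= 1 -> Rabs (A x) <= MA) -> (forall x, 0 <= x <= 1 -> mB <= Rabs (B x)) ->
  osc_le (fun x => A x / B x) (/ mB + MA / (mB * mB)) A B.
Proof.
  intros HMA HmB HA HB x y Hx Hy.
  pose proof (HB x Hx) as Bx. pose proof (HB y Hy) as By. pose proof (HA y Hy) as Ay.
  assert (Bx0 : B x <> 0) by (intro Z; rewrite Z, Rabs_R0 in Bx; lra).
  assert (By0 : B y <> 0) by (intro Z; rewrite Z, Rabs_R0 in By; lra).
  replace (A x / B x - A y / B y)
    with ((A x - A y) * / B x + A y * (B x - B y) * / - (B x * B y)) by (field; auto).
  eapply Rle_trans; [apply Rabs_triang|]. rewrite !Rabs_mult, !Rabs_inv, Rabs_Ropp, Rabs_mult.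
  pose proof (Rabs_pos (A x - A y)). pose proof (Rabs_pos (B x - B y)). pose proof (Rabs_pos (A y)).
  assert (I1 : / Rabs (B x) <= / mB) by (apply Rinv_le_contravar; lra).
  assert (I2 : / (Rabs (B x) * Rabs (B y)) <= / (mB * mB))
    by (apply Rinv_le_contravar; [nra | apply Rmult_le_compat; lra]).
  pose proof (Rinv_0_lt_compat (Rabs (B x)) ltac:(lra)).
  pose proof (Rinv_0_lt_compat (Rabs (B x) * Rabs (B y)) ltac:(nra)).
  pose proof (Rinv_0_lt_compat mB HmB). pose proof (Rinv_0_lt_compat (mB * mB) ltac:(nra)).
  assert (Rabs (A y) * Rabs (B x - B y) * / (Rabs (B x) * Rabs (B y))
          <= MA * Rabs (B x - B y) * / (mB * mB))
    by (apply Rmult_le_compat; try apply Rmult_le_compat_r; try apply Rmult_le_pos; lra).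
  assert (Rabs (A x - A y) * / Rabs (B x) <= Rabs (A x - A y) * / mB)
    by (apply Rmult_le_compat_l; lra).
  assert (0 <= / mB * Rabs (B x - B y)) by (apply Rmult_le_pos; lra).
  assert (0 <= MA * / (mB * mB) * Rabs (A x - A y)) by (apply Rmult_le_pos; [apply Rmult_le_pos|]; lra).
  unfold Rdiv. lra.
Qed.

Lemma cont01_const c : cont01 (fun _ => c).
Proof. intros x _ eps He. exists 1. split; [lra|]. intros. rewrite Rminus_diag, Rabs_R0; lra. Qed.

Lemma upper_box_dim_graph_const c : upper_box_dim (graph (fun _ => c)) = Finite 1.
Proof.
  apply Rbar_le_antisym; [|apply upper_box_dim_graph_ge1, cont01_const].
  apply upper_box_dim_le_of_grid with (K := 0) (n0 := 1%nat); [lra|].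
  intros n _ Hn. exists (nsum (fun _ => 1%nat) n). split.
  - apply (covers_by_graph_of_column_osc _ n (fun _ => 0) (fun _ => 0%nat)); auto.
    + intros. rewrite Rminus_diag, Rabs_R0. lra.
    + intros. simpl. lra.
  - rewrite nsum_const, Nat.mul_1_l. lra.
Qed.

Lemma cont01_div A B mB : 0 < mB -> cont01 A -> cont01 B ->
  (forall x, 0 <= x <= 1 -> mB <= Rabs (B x)) -> cont01 (fun x => A x / B x).
Proof.
  intros HmB HA HB Hlow. destruct (cont01_bounded A HA) as [MA [HMA BA]].
  apply (cont01_osc_le _ (/ mB + MA / (mB * mB)) A B); auto; [|apply osc_le_div; auto].
  pose proof (Rinv_0_lt_compat mB HmB).
  assert (0 <= MA / (mB * mB)) by (apply Rmult_le_pos; [|left; apply Rinv_0_lt_compat]; nra). lra.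
Qed.

Lemma upper_box_dim_graph_div_le A B mB D : 0 <= D -> 0 < mB -> cont01 A -> cont01 B ->
  (forall x, 0 <= x <= 1 -> mB <= Rabs (B x)) ->
  Rbar_le (upper_box_dim (graph A)) (Finite D) -> Rbar_le (upper_box_dim (graph B)) (Finite D) ->
  Rbar_le (upper_box_dim (graph (fun x => A x / B x))) (Finite D).
Proof.
  intros HD HmB HA HB Hlow DA DB. destruct (cont01_bounded A HA) as [MA [HMA BA]].
  apply (upper_box_dim_graph_le_osc _ (/ mB + MA / (mB * mB)) A B); auto; [|apply osc_le_div; auto].
  pose proof (Rinv_0_lt_compat mB HmB).
  assert (0 <= MA / (mB * mB)) by (apply Rmult_le_pos; [|left; apply Rinv_0_lt_compat]; nra). lra.
Qed.

Lemma upper_box_dim_graph_eq_of_osc u g C C' beta : 0 < beta -> 0 <= C -> 0 <= C' ->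
  cont01 u -> cont01 g -> osc_le u C g g -> osc_le g C' u u ->
  upper_box_dim (graph g) = Finite beta -> upper_box_dim (graph u) = Finite beta.
Proof.
  intros Hb HC HC' Hu Hg Hug Hgu Dg. apply Rbar_le_antisym.
  - apply (upper_box_dim_graph_le_osc u C g g); auto; try lra; rewrite Dg; simpl; lra.
  - apply Rbar_not_lt_le. intros Hlt.
    destruct (Rbar_lt_finite_max _ _ beta Hb Hlt Hlt) as [D [HD [Du _]]].
    assert (Rbar_le (upper_box_dim (graph g)) (Finite D))
      by (apply (upper_box_dim_graph_le_osc g C' u u); auto; lra).
    rewrite Dg in H. simpl in H. lra.
Qed.

Lemma Rabs_sub_le_mobius a c : 0 <= a <= 1 -> 0 <= c <= 1 ->
  Rabs (a - c) <= 4 * Rabs ((1 + 2 * a) / (1 + a) - (1 + 2 * c) / (1 + c)).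
Proof.
  intros Ha Hc.
  replace ((1 + 2 * a) / (1 + a) - (1 + 2 * c) / (1 + c)) with ((a - c) / ((1 + a) * (1 + c)))
    by (field; lra).
  unfold Rdiv. rewrite Rabs_mult, Rabs_inv, (Rabs_pos_eq ((1 + a) * (1 + c))) by nra.
  assert (Hp : 1 <= (1 + a) * (1 + c) <= 4) by nra.
  pose proof (Rabs_pos (a - c)).
  apply Rmult_le_reg_r with ((1 + a) * (1 + c)); [lra|].
  replace (4 * (Rabs (a - c) * / ((1 + a) * (1 + c))) * ((1 + a) * (1 + c))) with (4 * Rabs (a - c))
    by (field; lra). nra.
Qed.

(** * Factorization *)

Section Factorization.
Variables (beta : R) (f p : R -> R).
Hypothesis beta_gt1 : 1 < beta.
Hypothesis f_cont : cont01 f.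
Hypothesis f_nonzero : forall x, 0 <= x <= 1 -> f x <> 0.
Hypothesis f_dim : Rbar_le (upper_box_dim (graph f)) (Finite beta).
Hypothesis p_cont : cont01 p.
Hypothesis p_range : forall x, 0 <= p x <= 1.
Hypothesis p_dim : upper_box_dim (graph p) = Finite beta.

Definition shifted (t : R) (x : R) : R := 1 + t * p x.
Definition cofactor (t : R) (x : R) : R := f x / shifted t x.

Lemma shifted_bounds t x : 1 <= t <= 2 -> 1 <= shifted t x <= 3.
Proof. intros Ht. unfold shifted. pose proof (p_range x). nra. Qed.

Lemma shifted_sub t x y : Rabs (shifted t x - shifted t y) = Rabs t * Rabs (p x - p y).
Proof. unfold shifted. rewrite <- Rabs_mult. f_equal. ring. Qed.

Lemma shifted_cont t : 1 <= t <= 2 -> cont01 (shifted t).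
Proof.
  intros Ht. apply (cont01_osc_le _ t p p); auto; [lra|]. intros x y _ _.
  rewrite shifted_sub, (Rabs_pos_eq t) by lra. pose proof (Rabs_pos (p x - p y)). nra.
Qed.

Lemma shifted_dim t : 1 <= t <= 2 -> upper_box_dim (graph (shifted t)) = Finite beta.
Proof.
  intros Ht. apply (upper_box_dim_graph_eq_of_osc _ p t 1); auto; try lra;
    [apply shifted_cont; auto | |];
    intros x y _ _; rewrite shifted_sub, (Rabs_pos_eq t) by lra;
    pose proof (Rabs_pos (p x - p y)); nra.
Qed.

Lemma f_eq_shifted_cofactor t x : 1 <= t <= 2 -> f x = shifted t x * cofactor t x.
Proof. intros Ht. unfold cofactor. pose proof (shifted_bounds t x Ht). field. lra. Qed.

Lemma cofactor_cont t : 1 <= t <= 2 -> cont01 (cofactor t).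
Proof.
  intros Ht. apply (cont01_div _ _ 1); auto; [lra | apply shifted_cont; auto|].
  intros x _. pose proof (shifted_bounds t x Ht). rewrite Rabs_pos_eq; lra.
Qed.

Lemma cofactor_dim_le t : 1 <= t <= 2 -> Rbar_le (upper_box_dim (graph (cofactor t))) (Finite beta).
Proof.
  intros Ht. apply (upper_box_dim_graph_div_le _ _ 1); auto; try lra; [apply shifted_cont; auto| |].
  - intros x _. pose proof (shifted_bounds t x Ht). rewrite Rabs_pos_eq; lra.
  - rewrite shifted_dim; simpl; lra.
Qed.

(* If both cofactors had dimension below [beta], so would their quotient [(1 + 2 p) / (1 + p)],
   and hence [p] itself. *)
Lemma cofactor_dim_ge :
  Rbar_le (Finite beta) (upper_box_dim (graph (cofactor 1))) \/
  Rbar_le (Finite beta) (upper_box_dim (graph (cofactor 2))).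
Proof.
  apply NNPP. intros Hn. apply not_or_and in Hn as [H1 H2].
  apply Rbar_not_le_lt in H1, H2.
  destruct (Rbar_lt_finite_max _ _ beta ltac:(lra) H1 H2) as [D [HD [D1 D2]]].
  destruct (cont01_abs_bounded_below f f_cont f_nonzero) as [m [Hm Hmf]].
  assert (Hlow : forall x, 0 <= x <= 1 -> m / 3 <= Rabs (cofactor 2 x)).
  { intros x Hx. unfold cofactor. pose proof (shifted_bounds 2 x ltac:(lra)). pose proof (Hmf x Hx).
    unfold Rdiv. rewrite Rabs_mult, Rabs_inv, (Rabs_pos_eq (shifted 2 x)) by lra.
    apply Rmult_le_compat; try lra. apply Rinv_le_contravar; lra. }
  assert (Dq : Rbar_le (upper_box_dim (graph (fun x => cofactor 1 x / cofactor 2 x))) (Finite D)).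
  { apply (upper_box_dim_graph_div_le _ _ (m / 3)); auto; try lra; apply cofactor_cont; lra. }
  assert (Dp : Rbar_le (upper_box_dim (graph p)) (Finite D)).
  { apply (upper_box_dim_graph_le_osc p 2 (fun x => cofactor 1 x / cofactor 2 x)
             (fun x => cofactor 1 x / cofactor 2 x)); auto; try lra.
    - apply (cont01_div _ _ (m / 3)); auto; try lra; apply cofactor_cont; lra.
    - apply (cont01_div _ _ (m / 3)); auto; try lra; apply cofactor_cont; lra.
    - intros x y Hx Hy.
      assert (Hq : forall z, 0 <= z <= 1 ->
                cofactor 1 z / cofactor 2 z = (1 + 2 * p z) / (1 + p z)).
      { intros z Hz. unfold cofactor, shifted. pose proof (p_range z). pose proof (f_nonzero z Hz).
        field. repeat split; lra. }
      rewrite (Hq x Hx), (Hq y Hy). pose proof (Rabs_sub_le_mobius _ _ (p_range x) (p_range y)). lra. }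
  rewrite p_dim in Dp. simpl in Dp. lra.
Qed.

Lemma factorization_of_dim_le : exists g h : R -> R,
  cont01 g /\ cont01 h /\ (forall x, 0 <= x <= 1 -> f x = g x * h x) /\
  upper_box_dim (graph g) = Finite beta /\ upper_box_dim (graph h) = Finite beta.
Proof.
  assert (Hfact : forall t, 1 <= t <= 2 ->
            Rbar_le (Finite beta) (upper_box_dim (graph (cofactor t))) ->
            exists g h : R -> R,
              cont01 g /\ cont01 h /\ (forall x, 0 <= x <= 1 -> f x = g x * h x) /\
              upper_box_dim (graph g) = Finite beta /\ upper_box_dim (graph h) = Finite beta).
  { intros t Ht Hge. exists (shifted t), (cofactor t).
    repeat split; [apply shifted_cont | apply cofactor_cont | intros; apply f_eq_shifted_cofactor
                   | apply shifted_dim | apply Rbar_le_antisym; [apply cofactor_dim_le |]]; auto. }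
  destruct cofactor_dim_ge; [apply (Hfact 1) | apply (Hfact 2)]; auto; lra.
Qed.

End Factorization.

Theorem theorem3p9 (beta : R) (f : R -> R) :
  1 <= beta <= 2 ->
  cont01 f ->
  (forall x, 0 <= x <= 1 -> f x <> 0) ->
  ((exists g h : R -> R,
      cont01 g /\ cont01 h /\
      (forall x, 0 <= x <= 1 -> f x = g x * h x) /\
      upper_box_dim (graph g) = Finite beta /\
      upper_box_dim (graph h) = Finite beta)
   <-> Rbar_le (upper_box_dim (graph f)) (Finite beta)).
Proof.
  intros Hbeta Hf Hnz. split.
  - intros (g & h & Hg & Hh & Hfgh & Dg & Dh).
    destruct (cont01_bounded g Hg) as [Mg [HMg Bg]], (cont01_bounded h Hh) as [Mh [HMh Bh]].
    apply (upper_box_dim_graph_le_osc f (Mg + Mh) g h); auto; try lra.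
    + apply osc_le_mul; auto.
    + rewrite Dg; simpl; lra.
    + rewrite Dh; simpl; lra.
  - intros Df. destruct (Req_dec beta 1) as [->|Hb1].
    + exists (fun _ => 1), f. repeat split; auto using cont01_const, upper_box_dim_graph_const.
      * intros; ring.
      * apply Rbar_le_antisym; auto using upper_box_dim_graph_ge1.
    + destruct (graph_of_dim_exists beta) as (p & Hp & Hp01 & Dp); [lra|].
      apply (factorization_of_dim_le beta f p); auto; lra.
Qed.
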